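(* For every positive integer $l$ there is a constant $c_l$ such that the following holds. Let $T$ be an out-directed tree on $n$ vertices with $l$ out-leaves, and let $m$ be a positive integer. Then every directed graph $G$ on at least $c_l n m$ vertices either contains a copy of $T$ as a subgraph or contains an independent set of size $m$.
   Context: An out-directed tree is an oriented tree (underlying graph a tree, no bidirected edges) with a root $r$ such that all edges are directed away from $r$. An out-leaf is a vertex of out-degree $0$. An independent set in a directed graph is a set of vertices with no edge (in either direction) between any two of them. *)

From mathcomp Require Import all_boot.
Set Implicit Arguments. Unset Strict Implicit. Unset Printing Implicit Defensive.

(* A directed graph on a finite vertex type V is an edge relation E : rel V
   (E x y means there is an edge x -> y). *)

Definition und_adj (V : finType) (E : rel V) : rel V := fun x y => E x y || E y x.

Definition n_edges (V : finType) (E : rel V) : nat :=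
  #|[set p : V * V | E p.1 p.2]|.

Definition oriented (V : finType) (E : rel V) : Prop :=
  (forall x, ~~ E x x) /\ (forall x y, E x y -> ~~ E y x).

(* the underlying undirected graph is a tree: nonempty, connected,
   with exactly |V| - 1 edges (for an oriented graph, directed edges
   correspond bijectively to undirected edges). *)
Definition underlying_tree (V : finType) (E : rel V) : Prop :=
  0 < #|V| /\ (forall x y, connect (und_adj E) x y) /\ n_edges E + 1 = #|V|.

(* out-directed tree: oriented tree with a root r such that every edge
   is directed away from r, i.e. its tail is reachable from r by a
   directed path. *)
Definition out_tree (V : finType) (E : rel V) : Prop :=
  oriented E /\ underlying_tree E /\
  exists r : V, forall u v, E u v -> connect E r u.

Definition out_leaves (V : finType) (E : rel V) : {set V} :=
  [set v | [forall w, ~~ E v w]].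

Definition contains_copy (T V : finType) (ET : rel T) (G : rel V) : Prop :=
  exists f : T -> V, injective f /\ forall u v, ET u v -> G (f u) (f v).

Definition independent (V : finType) (G : rel V) (S : {set V}) : Prop :=
  forall x y, x \in S -> y \in S -> x != y -> ~~ G x y.

From mathcomp Require Import all_boot.
From mathcomp Require Import zify.
From Stdlib Require Import Classical.
Set Implicit Arguments. Unset Strict Implicit. Unset Printing Implicit Defensive.

(* Since G has no independent m-set, the height classes of a maximal acyclic
   subgraph of G[W] are independent, so any (n-1)(m-1)+1 vertices W carry a
   directed path on n = |T| vertices (Gallai-Roy); hence G has M = 2 l^3 m + 1
   vertex-disjoint such paths Q_a. Choosing one child of each vertex splits T
   into directed paths started at the root and at fewer than l branch
   vertices. Vertex v goes to Q_(psi v) (level v), where the level grows along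
   T except at branch vertices, which jump from the path of their parent to an
   unused path joined to it by an edge at the same level. Such a path always
   exists among the paths surviving l rounds of discarding those with fewer
   than l surviving neighbours: the discarded paths induce a digraph of small
   out-degree, hence contain a large independent set, so few are discarded. *)

Definition indep_free (V : finType) (G : rel V) (m : nat) : Prop :=
  forall S : {set V}, #|S| = m -> ~ independent G S.

Section IndependentSets.
Variables (V : finType) (G : rel V).

Lemma independentS (S1 S2 : {set V}) :
  S1 \subset S2 -> independent G S2 -> independent G S1.
Proof. by move=> /subsetP sS12 iS2 x y /sS12 xS /sS12 yS; apply: iS2. Qed.

Lemma indep_free_gt0 m : indep_free G m -> 0 < m.
Proof.
by case: m => // /(_ set0); rewrite cards0 => /(_ erefl); case=> x y; rewrite inE.
Qed.

Lemma indep_free_card m (S : {set V}) :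
  indep_free G m -> independent G S -> #|S| < m.
Proof.
move=> freeG iS; rewrite ltnNge; apply/negP => /card_geqP [s [us szs sS]].
apply: (freeG [set x in s]); first by rewrite cardsE (card_uniqP us).
by apply: independentS iS; apply/subsetP => x; rewrite inE => /sS.
Qed.

End IndependentSets.

Lemma sum_card_transpose (T : finType) (B : {set T}) (R : rel T) :
  \sum_(v in B) #|[set u in B | R u v]| = \sum_(u in B) #|[set v in B | R u v]|.
Proof.
have cardE (P : pred T) : #|[set x in B | P x]| = \sum_(x in B) P x.
  rewrite -sum1_card big_mkcond [RHS]big_mkcond; apply: eq_bigr => x _.
  by rewrite !inE; case: (x \in B); case: (P x).
under eq_bigr => v _ do rewrite cardE.
by rewrite exchange_big; apply: eq_bigr => u _; rewrite cardE.
Qed.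

Lemma card_bigcup_le (I U : finType) (A : {pred I}) (F : I -> {set U}) :
  #|\bigcup_(i in A) F i| <= \sum_(i in A) #|F i|.
Proof.
elim/big_rec2: _ => [|i n X _ le]; first by rewrite cards0.
exact: leq_trans (leq_card_setU _ _) (leq_add _ le).
Qed.

Section LowOutdegree.
Variables (T : finType) (R : rel T) (K : nat).

(* Double counting: the average in-degree equals the average out-degree. *)
Lemma exists_low_indeg (B : {set T}) :
  B != set0 -> (forall a, a \in B -> #|[set b in B | R a b]| < K) ->
  exists2 v, v \in B & #|[set u in B | R u v]| < K.
Proof.
case/set0Pn => v0 v0B lowB; apply/exists_inP; apply: contraT.
rewrite negb_exists_in => /forall_inP highB.
suff : \sum_(u in B) #|[set v in B | R u v]| < \sum_(v in B) #|[set u in B | R u v]|.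
  by rewrite sum_card_transpose ltnn.
rewrite (bigD1 v0) //= [X in _ < X](bigD1 v0) //= -addSn.
apply: leq_add; first by rewrite (leq_trans (lowB v0 v0B)) // leqNgt highB.
apply: leq_sum => u /andP [uB _]; apply: ltnW (leq_trans (lowB u uB) _).
by rewrite leqNgt highB.
Qed.

(* Greedily pick a vertex v of in-degree < K and delete it with its fewer
   than 2K - 1 other neighbours. *)
Lemma indep_of_low_outdeg (B : {set T}) : 0 < K ->
  (forall a, a \in B -> #|[set b in B | R a b]| < K) ->
  exists I : {set T}, [/\ I \subset B, independent R I & #|B| <= (2 * K - 1) * #|I|].
Proof.
move=> K0; have [n] := ubnP #|B|; elim: n B => // n IH B szB lowB.
have [->|B0] := eqVneq B set0.
  by exists set0; split; rewrite ?sub0set ?cards0 // => x y; rewrite inE.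
have [v vB lowv] := exists_low_indeg B0 lowB.
pose N := [set v] :|: [set u in B | R u v] :|: [set u in B | R v u].
have vN : v \in N by rewrite !inE eqxx.
have cardN : #|N| <= 2 * K - 1.
  apply: leq_trans (leq_card_setU _ _) _.
  apply: leq_trans (leq_add (leq_card_setU _ _) (leqnn _)) _.
  by rewrite cards1; have := lowB v vB; lia.
have szBN : #|B :\: N| < n.
  rewrite -ltnS (leq_trans _ szB) // ltnS; apply: proper_card.
  by apply/properP; split; [exact: subsetDl | exists v; rewrite // inE vN].
have lowBN a : a \in B :\: N -> #|[set b in B :\: N | R a b]| < K.
  move=> /setDP [aB _]; apply: leq_ltn_trans (lowB a aB).
  by apply: subset_leq_card; apply/subsetP => b; rewrite !inE => /andP [/andP [_ ->] ->].
have [I [IB iI cardI]] := IH _ szBN lowBN.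
have farI x : x \in I -> ~~ R v x && ~~ R x v.
  move=> /(subsetP IB); rewrite !inE !negb_or => /andP [/andP [/andP [_ h1] h2] xB].
  by move: h1 h2; rewrite xB => -> ->.
have vI : v \notin I by apply: contraTN vN => /(subsetP IB) /setDP [].
exists (v |: I); split.
- by rewrite subUset sub1set vB (subset_trans IB (subsetDl _ _)).
- move=> x y; rewrite !inE => /orP [/eqP ->|xI] /orP [/eqP ->|yI]; rewrite ?eqxx //.
  + by case/andP: (farI y yI).
  + by case/andP: (farI x xI).
  + exact: iI.
- have : #|B| <= #|B :\: N| + #|N|.
    by rewrite -(cardsID N B) addnC leq_add // subset_leq_card // subsetIr.
  by rewrite cardsU1 vI mulnDr muln1; lia.
Qed.

End LowOutdegree.

Section GallaiRoy.
Variables (V : finType) (G : rel V) (W : {set V}).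

Definition edges_in : {set V * V} :=
  [set p | [&& p.1 \in W, p.2 \in W, p.1 != p.2 & G p.1 p.2]].

Definition edge_rel (E : {set V * V}) : rel V := fun x y => (x, y) \in E.

Definition acyclic (E : {set V * V}) : bool :=
  [forall x, forall y, ((x, y) \in E) ==> ~~ connect (edge_rel E) y x].

Lemma acyclic_path_uniq E x p : acyclic E -> path (edge_rel E) x p -> uniq (x :: p).
Proof.
move=> /forallP acE; elim: p x => [|y p IH] x //= /andP [exy py].
have /= -> := IH y py; rewrite andbT; apply/negP => /(path_connect py).
by move: (acE x) => /forallP /(_ y) /implyP /(_ exy) /negP.
Qed.

Lemma connect_setU1 E u v a b : connect (edge_rel ((u, v) |: E)) a b ->
  connect (edge_rel E) a b \/ connect (edge_rel E) a u /\ connect (edge_rel E) v b.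
Proof.
case/connectP => p pp ->; elim: p a pp => [|c p IH] a /=; first by left.
rewrite {1}/edge_rel in_setU1 => /andP [/orP [/eqP [-> ->]|eac] pc].
  by right; split => //; case: (IH v pc) => [|[]] // h; apply: connect_trans h.
case: (IH c pc) => [h|[h1 h2]]; [left | right; split => //];
  exact: connect_trans (connect1 eac) _.
Qed.

Definition max_dag := [arg max_(E > set0 | acyclic E && (E \subset edges_in)) #|E|].

Lemma max_dagP : [/\ acyclic max_dag, max_dag \subset edges_in &
  forall E, acyclic E -> E \subset edges_in -> #|E| <= #|max_dag|].
Proof.
rewrite /max_dag; case: arg_maxnP => [|E /andP [acE sE] maxE].
  by rewrite sub0set andbT; apply/forallP=> x; apply/forallP => y; rewrite inE.
by split => // E' acE' sE'; apply: maxE; rewrite acE' sE'.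
Qed.

Lemma max_dag_back u v :
  (u, v) \in edges_in -> (u, v) \notin max_dag -> connect (edge_rel max_dag) v u.
Proof.
move=> uvG uvE; have [acE sE maxE] := max_dagP.
have : ~~ acyclic ((u, v) |: max_dag).
  apply/negP => /maxE; rewrite subUset sub1set uvG sE cardsU1 uvE.
  by move=> /(_ isT); rewrite add1n ltnn.
rewrite negb_forall => /existsP [x]; rewrite negb_forall => /existsP [y].
rewrite negb_imply negbK in_setU1 => /andP [/orP [/eqP [-> ->]|xy] cyx].
  by case: (connect_setU1 cyx) => [|[]//]; move/forallP: acE.
have nyx : ~~ connect (edge_rel max_dag) y x.
  by move/forallP: acE => /(_ x) /forallP /(_ y) /implyP; apply.
case: (connect_setU1 cyx) => [|[h1 h2]]; first by rewrite (negbTE nyx).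
exact: connect_trans h2 (connect_trans (connect1 xy) h1).
Qed.

Definition has_path_of (v : V) (k : nat) : bool :=
  [exists p : k.-tuple V, path (edge_rel max_dag) v p].

Lemma has_path_ofP v s : path (edge_rel max_dag) v s -> has_path_of v (size s).
Proof. by move=> ps; apply/existsP; exists (in_tuple s). Qed.

Lemma has_path_of_lt v k : has_path_of v k -> k < #|V|.
Proof.
have [acE _ _] := max_dagP; case/existsP => p /(acyclic_path_uniq acE) up.
by have := max_card (mem (v :: p)); rewrite (card_uniqP up) /= size_tuple.
Qed.

Definition height v := \max_(k < #|V| | has_path_of v k) k.

Lemma has_path_of_height v : has_path_of v (height v).
Proof.
have V0 : 0 < #|V| by apply/card_gt0P; exists v.
have : 0 < #|[pred k : 'I_#|V| | has_path_of v k]|.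
  by apply/card_gt0P; exists (Ordinal V0); apply: (@has_path_ofP v [::]).
by case/(eq_bigmax_cond (fun k : 'I_#|V| => nat_of_ord k)) => k pk; rewrite /height => ->.
Qed.

Lemma leq_height v k : has_path_of v k -> k <= height v.
Proof.
move=> pk; have := @leq_bigmax_cond _ (fun k : 'I_#|V| => has_path_of v k).
by move=> /(_ (fun k => nat_of_ord k) (Ordinal (has_path_of_lt pk)) pk).
Qed.

(* An edge of G not in the maximal dag closes a cycle with it, so in both
   cases one endpoint heads a longer path than the other. *)
Lemma height_edge u v : (u, v) \in edges_in -> height u != height v.
Proof.
move=> uvG; have [uvE|uvE] := boolP ((u, v) \in max_dag).
  case/existsP: (has_path_of_height v) => p pp.
  have := @has_path_ofP u (v :: p); rewrite /= size_tuple pp andbT.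
  by move=> /(_ uvE) /leq_height; rewrite neq_ltn orbC => ->.
case/connectP: (max_dag_back uvG uvE) => q qp qu.
case/existsP: (has_path_of_height u) => p pp.
have := @has_path_ofP v (q ++ p); rewrite cat_path qp -qu pp size_cat size_tuple.
move=> /(_ isT) /leq_height; case: q {qp} qu => [/= vu|a q _ hq].
  by move: uvG; rewrite inE vu /= eqxx !andbF.
by rewrite neq_ltn (leq_trans _ hq) //= addSn ltnS leq_addl.
Qed.

Lemma height_class_independent k : independent G [set v in W | height v == k].
Proof.
move=> x y; rewrite !inE => /andP [xW /eqP hx] /andP [yW /eqP hy] xy.
apply: contraTN (eqxx k) => Gxy; rewrite -{1}hx -hy.
by apply: height_edge; rewrite inE /= xW yW xy Gxy.
Qed.

Lemma card_height_lt N :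
  #|[set v in W | height v < N]| <= \sum_(k < N) #|[set v in W | height v == k]|.
Proof.
elim: N => [|N IH].
  by rewrite big_ord0 leqn0 cards_eq0; apply/eqP/setP => x; rewrite !inE andbF.
rewrite big_ord_recr /=; apply: leq_trans (leq_add IH (leqnn _)).
apply: leq_trans (leq_card_setU _ _); apply: subset_leq_card; apply/subsetP => x.
by rewrite !inE ltnS leq_eqVlt; case: (x \in W) => //=; rewrite orbC.
Qed.

Lemma directed_path_in n m : 0 < n -> indep_free G m -> n.-1 * m.-1 < #|W| ->
  exists p : nat -> V, [/\ forall i j, i < n -> j < n -> p i = p j -> i = j,
     forall i, i < n -> p i \in W & forall i, i.+1 < n -> G (p i) (p i.+1)].
Proof.
move=> n0 freeG szW; have [acE sE _] := max_dagP.
have edge_in x y : edge_rel max_dag x y -> [&& x \in W, y \in W, x != y & G x y].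
  by move=> /(subsetP sE); rewrite inE.
have [/exists_inP [v vW hv]|] := boolP [exists v in W, n.-1 <= height v].
  case/existsP: (has_path_of_height v) => p pp.
  have szp : n <= size (v :: p) by rewrite /= size_tuple; lia.
  have step i : i.+1 < n -> [&& nth v (v :: p) i \in W, nth v p i \in W,
      nth v (v :: p) i != nth v p i & G (nth v (v :: p) i) (nth v p i)].
    move=> iN; apply: edge_in; apply: (pathP v pp).
    by move: szp; rewrite /= !size_tuple; lia.
  exists (nth v (v :: p)); split.
  - move=> i j ilt jlt /eqP.
    rewrite nth_uniq ?(acyclic_path_uniq acE pp) ?(leq_trans _ szp) //; exact/eqP.
  - by case=> [|i] // iN; case/and4P: (step i iN).
  - by move=> i iN; case/and4P: (step i iN).
rewrite negb_exists_in => /forall_inP low.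
have smallk k : #|[set v in W | height v == k]| <= m.-1.
  by have := indep_free_card freeG (height_class_independent (k := k)); lia.
have WE : W = [set v in W | height v < n.-1].
  by apply/setP => x; rewrite inE ltnNge; case: (boolP (x \in W)) => //= /low ->.
have : \sum_(k < n.-1) #|[set v in W | height v == k]| <= \sum_(k < n.-1) m.-1.
  by apply: leq_sum => k _; apply: smallk.
move/(leq_trans (card_height_lt _)); rewrite -WE.
by rewrite sum_nat_const card_ord; lia.
Qed.

End GallaiRoy.

(* [Q a] is the a-th path, with vertices [Q a 0 -> Q a 1 -> ... -> Q a n.-1]. *)
Definition disjoint_dipaths (V : finType) (G : rel V) (M n : nat)
    (Q : nat -> nat -> V) : Prop :=
  (forall a i b j, a < M -> i < n -> b < M -> j < n -> Q a i = Q b j -> a = b /\ i = j)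
  /\ (forall a i, a < M -> i.+1 < n -> G (Q a i) (Q a i.+1)).

Lemma disjoint_paths (V : finType) (G : rel V) n m M : 0 < n ->
  indep_free G m -> (M + m) * n <= #|V| -> exists Q, disjoint_dipaths G M n Q.
Proof.
move=> n0 freeG; elim: M => [|M IH] szV.
  have [x0 _] : exists x0 : V, x0 \in [set: V].
    apply/card_gt0P; rewrite cardsT (leq_trans _ szV) // muln_gt0 n0 andbT.
    exact: indep_free_gt0 freeG.
  by exists (fun _ _ => x0); split.
have [Q [Qinj QG]] := IH (leq_trans (leq_mul (leqnSn _) (leqnn n)) szV).
pose used := [set Q x.1 x.2 | x : 'I_M * 'I_n].
pose W := ~: used.
have cW : n.-1 * m.-1 < #|W|.
  have : #|used| <= M * n.
    by apply: leq_trans (leq_imset_card _ _) _; rewrite card_prod !card_ord.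
  by rewrite /W cardsCs; nia.
have [p [pinj pW pG]] := directed_path_in n0 freeG cW.
have pQ a i j : a < M -> i < n -> j < n -> p j <> Q a i.
  move=> aM iN jN pjQ; move: (pW j jN); rewrite inE pjQ.
  by case/negP; apply/imsetP; exists (Ordinal aM, Ordinal iN).
exists (fun a i => if a == M then p i else Q a i); split.
- move=> a i b j aM iN bM jN; rewrite !ltnS in aM bM.
  case: (ltngtP a M) aM => // [aM _|-> _]; case: (ltngtP b M) bM => // [bM _|-> _].
  + exact: Qinj.
  + by move=> /esym /(pQ _ _ _ aM iN jN).
  + by move=> /(pQ _ _ _ bM jN iN).
  + by move/pinj; auto.
- move=> a i aM iN; rewrite ltnS in aM.
  by case: (ltngtP a M) aM => // [aM|_] _; [exact: QG | exact: pG].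
Qed.

Section OutTree.
Variables (T : finType) (ET : rel T) (r : T).
Hypothesis T_connected : forall x y, connect (und_adj ET) x y.
Hypothesis T_edges : n_edges ET + 1 = #|T|.
Hypothesis T_root : forall u v, ET u v -> connect ET r u.

Lemma connect_root v : connect ET r v.
Proof.
have walk x p : connect ET r x -> path (und_adj ET) x p -> connect ET r (last x p).
  elim: p x => [|y p IH] x rx //= /andP [xy py]; apply: IH py.
  by case/orP: xy => [xy|/T_root //]; apply: connect_trans rx (connect1 xy).
by case/connectP: (T_connected r v) => p pp ->; apply: walk pp.
Qed.

Lemma exists_in_edge v : v != r -> exists u, ET u v.
Proof.
move=> vr; case/connectP: (connect_root v) => p; case/lastP: p => [_ /= vE|q w].
  by rewrite vE eqxx in vr.
by rewrite rcons_path last_rcons => /andP [_ e] ->; exists (last r q).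
Qed.

Definition indeg v := #|[set u | ET u v]|.

Lemma sum_indeg : \sum_v indeg v = #|T|.-1.
Proof.
have cardE (P : pred _) : #|[set x | P x]| = \sum_x P x.
  by rewrite -sum1_card big_mkcond /=; apply: eq_bigr => x _; rewrite inE.
rewrite -T_edges addn1 /n_edges cardE /indeg.
by under eq_bigr => v _ do rewrite cardE; rewrite exchange_big pair_big.
Qed.

(* The in-degrees sum to |T| - 1 and every non-root vertex has at least one. *)
Lemma indeg_spec : indeg r = 0 /\ forall v, v != r -> indeg v = 1.
Proof.
have indeg_gt0 v : v != r -> 0 < indeg v.
  by move=> /exists_in_edge [u e]; apply/card_gt0P; exists u; rewrite inE.
have := sum_indeg; rewrite (bigD1 r) //=.
have -> : \sum_(v | v != r) indeg v =
          #|T|.-1 + \sum_(v | v != r) (indeg v - 1).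
  rewrite -(cardC1 r) -sum1_card -big_split /=.
  by apply: eq_bigr => v /indeg_gt0; rewrite add1n subn1 => /prednK.
set s := \sum_(v | v != r) _ => S.
have [-> /eqP] : indeg r = 0 /\ s = 0 by move: S; set t := #|T|.-1; lia.
rewrite sum_nat_eq0 => /forallP exc; split=> // v vr.
by move: (exc v) (indeg_gt0 v vr); rewrite vr /=; lia.
Qed.

Definition parent v := odflt v [pick u | ET u v].

Lemma edge_parent u v : ET u v -> v != r /\ u = parent v.
Proof.
move=> e; have [indeg_r indeg_v] := indeg_spec.
have vr : v != r.
  apply: contraTneq e => vr; move: indeg_r; rewrite /indeg -vr => /eqP.
  by rewrite cards_eq0 => /eqP /setP /(_ u); rewrite !inE => ->.
split=> //; rewrite /parent; case: pickP => [w ew|/(_ u)]; last by rewrite e.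
have /eqP /cards1P [z hz] := indeg_v v vr.
by move: (in_set1 u z) (in_set1 w z); rewrite -hz !inE e ew => /esym/eqP -> /esym/eqP ->.
Qed.

Lemma iter_parent_last p : path ET r p -> iter (size p) parent (last r p) = r.
Proof.
elim/last_ind: p => [|q w IH] //.
rewrite rcons_path last_rcons size_rcons iterSr => /andP [pq /edge_parent [_ <-]].
exact: IH pq.
Qed.

Lemma iter_parent_root v : exists k, iter k parent v == r.
Proof.
by case/connectP: (connect_root v) => p pp ->; exists (size p); rewrite iter_parent_last.
Qed.

Definition depth v := ex_minn (iter_parent_root v).

Lemma depth_spec v :
  iter (depth v) parent v = r /\ forall k, iter k parent v = r -> depth v <= k.
Proof.
by rewrite /depth; case: ex_minnP => k /eqP hk kmin; split=> // j /eqP /kmin.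
Qed.

Lemma depth_parent v : v != r -> depth v = (depth (parent v)).+1.
Proof.
move=> vr; have [h1 m1] := depth_spec v; have [h2 m2] := depth_spec (parent v).
have : depth v <= (depth (parent v)).+1 by apply: m1; rewrite iterSr.
case: (depth v) h1 m1 => [/= vE|d]; first by rewrite vE eqxx in vr.
by rewrite iterSr ltnS => h1 _ le; apply/eqP; rewrite eqSS eqn_leq le m2.
Qed.

Lemma depth_lt v : depth v < #|T|.
Proof.
case/connectP: (connect_root v) => p pp ->; case: (shortenP pp) => p' pp' up _.
move: (iter_parent_last pp') => /(proj2 (depth_spec _)) /leq_ltn_trans; apply.
by have := max_card (mem (r :: p')); rewrite (card_uniqP up).
Qed.

(* [heir u] is a chosen child of [u]; following heirs splits T into
   directed paths, each of which starts at the root or at a branch vertex. *)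
Definition heir u := odflt u [pick w | ET u w].
Definition branch v := (v != r) && (v != heir (parent v)).
Definition branches := [set v | branch v].

Lemma branch_neq_root v : branch v -> v != r.
Proof. by case/andP. Qed.

Lemma heir_edge u : u \notin out_leaves ET -> ET u (heir u).
Proof.
rewrite inE negb_forall => /existsP [w]; rewrite negbK => euw.
by rewrite /heir; case: pickP => [z ez|/(_ w)] //=; rewrite euw.
Qed.

Lemma nonbranch_inj v w : v != r -> w != r -> ~~ branch v -> ~~ branch w ->
  parent v = parent w -> v = w.
Proof.
move=> vr wr; rewrite /branch vr wr /= !negbK => /eqP vE /eqP wE pvw.
by rewrite vE wE pvw.
Qed.

(* [heir] maps the non-leaves injectively to non-root, non-branch vertices. *)
Lemma card_branches_le : #|branches| <= #|out_leaves ET| - 1.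
Proof.
pose heirs := [set v | (v != r) && ~~ branch v].
have heir_inj : {in ~: out_leaves ET &, injective heir}.
  move=> u w; rewrite !in_setC => /heir_edge /edge_parent [_ uE].
  by move=> /heir_edge /edge_parent [_ wE] huw; rewrite uE wE huw.
have : #|~: out_leaves ET| <= #|heirs|.
  rewrite -(card_in_imset heir_inj); apply: subset_leq_card.
  apply/subsetP => _ /imsetP [u /[!in_setC] /heir_edge e ->].
  by have [hr pu] := edge_parent e; rewrite inE /branch hr /= -pu eqxx.
have : #|branches| + #|heirs| = #|T|.-1.
  rewrite -(cardsC1 r) -(cardsID branches [set~ r]).
  congr (_ + _); apply: eq_card => v; rewrite !inE /branch.
    by case: (v =P r).
  by rewrite andbC.
by have := cardsC (out_leaves ET); lia.
Qed.

Definition branch_count v := \sum_(i < depth v) branch (iter i parent v).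

(* Positions along the heir paths, shifted so that a branch vertex sits at
   the same level as its parent. *)
Definition level v := depth v - branch_count v.

Lemma branch_count_le v : branch_count v <= depth v.
Proof.
have : branch_count v <= \sum_(i < depth v) 1 by apply: leq_sum => i _; apply: leq_b1.
by rewrite sum_nat_const card_ord muln1.
Qed.

Lemma branch_count_parent v : v != r ->
  branch_count v = branch v + branch_count (parent v).
Proof.
move=> vr; rewrite /branch_count depth_parent // big_ord_recl /=.
by congr (_ + _); apply: eq_bigr => i _; rewrite -iterS iterSr.
Qed.

Lemma level_heir v : v != r -> ~~ branch v -> level v = (level (parent v)).+1.
Proof.
move=> vr nb; rewrite /level depth_parent // branch_count_parent // (negbTE nb).
by have := branch_count_le (parent v); lia.
Qed.

Lemma level_branch v : branch v -> level v = level (parent v).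
Proof.
move=> bv; have vr := branch_neq_root bv.
rewrite /level depth_parent // branch_count_parent // bv.
by have := branch_count_le (parent v); lia.
Qed.

Lemma level_lt v : level v < #|T|.
Proof. by apply: leq_ltn_trans (depth_lt v); apply: leq_subr. Qed.

Section Embedding.
Variables (V : finType) (G : rel V) (m M l : nat) (Q : nat -> nat -> V).
Hypothesis Q_paths : disjoint_dipaths G M #|T| Q.
Hypothesis G_free : indep_free G m.
Hypothesis leaves_l : #|out_leaves ET| = l.
Hypothesis l_gt0 : 0 < l.
Hypothesis M_large : 2 * l * l * l * m < M.

Lemma card_branches : #|branches| < l.
Proof. by have := card_branches_le; rewrite leaves_l; lia. Qed.

Definition joins (t : nat) : rel 'I_M := fun a b => G (Q a t) (Q b t).

Fixpoint good (k : nat) : {set 'I_M} :=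
  if k is k'.+1 then
    [set a in good k' | [forall v in branches,
       l <= #|[set b in good k' | joins (level (parent v)) a b]|]]
  else setT.

Lemma card_low_joins (S : {set 'I_M}) t : t < #|T| ->
  #|[set a in S | #|[set b in S | joins t a b]| < l]| <= (2 * l - 1) * m.-1.
Proof.
move=> tT; set B := [set a in S | _].
have lowB a : a \in B -> #|[set b in B | joins t a b]| < l.
  rewrite inE => /andP [_]; apply: leq_ltn_trans; apply: subset_leq_card.
  by apply/subsetP => b; rewrite !inE => /andP [/andP [-> _] ->].
have [I [_ iI cardB]] := indep_of_low_outdeg l_gt0 lowB.
apply: leq_trans cardB _; rewrite leq_mul2l -ltnS prednK ?(indep_free_gt0 G_free) //.
have Qt_inj : injective (fun a : 'I_M => Q a t).
  by move=> a b /(proj1 Q_paths _ _ _ _ (ltn_ord a) tT (ltn_ord b) tT) [/val_inj].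
rewrite orbC -(card_imset _ Qt_inj) (indep_free_card G_free) //.
move=> _ _ /imsetP [a aI ->] /imsetP [b bI ->] Qab.
by apply: iI => //; apply: contraNneq Qab => ->.
Qed.

Lemma good_subset i j : i <= j -> good j \subset good i.
Proof.
move=> /subnK <-; elim: (j - i) => [|d IH] //=.
by apply: subset_trans IH; apply/subsetP => a; rewrite inE => /andP [].
Qed.

Lemma card_not_good k : #|~: good k| <= k * (#|branches| * ((2 * l - 1) * m.-1)).
Proof.
elim: k => [|k IH]; first by rewrite setCT cards0.
pose low v := [set a in good k | #|[set b in good k | joins (level (parent v)) a b]| < l].
have : ~: good k.+1 \subset ~: good k :|: \bigcup_(v in branches) low v.
  apply/subsetP => a; rewrite !inE /= negb_and => /orP [->//|].
  rewrite negb_forall => /existsP [v]; rewrite negb_imply -ltnNge => /andP [vJ lt].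
  case aG : (a \in good k) => //=; apply/bigcupP; exists v => //.
  by rewrite inE aG.
move/subset_leq_card/leq_trans; apply.
apply: leq_trans (leq_card_setU _ _) _; rewrite mulSn addnC leq_add //.
apply: leq_trans (card_bigcup_le _ _) _; rewrite -sum_nat_const.
by apply: leq_sum => v _; apply: card_low_joins; apply: level_lt.
Qed.

Lemma exists_good : exists a, a \in good l.
Proof.
apply/set0Pn; rewrite -card_gt0.
have := card_not_good l; have := cardsC (good l); rewrite card_ord.
have : l * (#|branches| * ((2 * l - 1) * m.-1)) <= l * (l * (2 * l * m)).
  by rewrite leq_mul2l leq_mul ?orbT // ?(ltnW card_branches) // leq_mul ?leq_subr ?leq_pred.
lia.
Qed.

Definition starts v := (v == r) || branch v.

(* [psi x] is the index of the path hosting [x], which is placed at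
   [Q (psi x) (level x)]. Each used path is entered at its lowest occupied
   level by a starting vertex, and branch vertices placed so far shrink the
   pool of good paths. *)
Record partial_embedding (X : {set T}) (psi : T -> 'I_M) : Prop := PartialEmbedding {
  pe_root : r \in X;
  pe_parent : forall x, x \in X -> x != r -> parent x \in X;
  pe_heir : forall x, x \in X -> x != r -> ~~ branch x -> psi x = psi (parent x);
  pe_branch : forall x, x \in X -> branch x ->
    joins (level (parent x)) (psi (parent x)) (psi x);
  pe_inj : forall x y, x \in X -> y \in X -> psi x = psi y -> level x = level y -> x = y;
  pe_good : forall x, x \in X -> psi x \in good (l - #|X :&: branches|);
  pe_start : forall x, x \in X -> exists2 s, s \in X & starts s && (psi s == psi x);
  pe_start_min : forall s y, s \in X -> y \in X -> starts s -> psi s = psi y ->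
    level s <= level y
}.

Lemma partial_embedding_root : exists psi, partial_embedding [set r] psi.
Proof.
have [a0 a0good] := exists_good; exists (fun _ => a0); split.
- by rewrite inE.
- by move=> x /set1P ->; rewrite eqxx.
- by move=> x /set1P ->; rewrite eqxx.
- by move=> x /set1P -> /branch_neq_root; rewrite eqxx.
- by move=> x y /set1P -> /set1P ->.
- have -> : [set r] :&: branches = set0.
    by apply/setP => y; rewrite !inE; case: eqP => // ->; rewrite /branch eqxx.
  by rewrite cards0 subn0.
- by move=> x _; exists r; rewrite ?inE /starts ?eqxx.
- by move=> s y /set1P -> /set1P ->.
Qed.

Lemma card_used_paths X psi :
  partial_embedding X psi -> #|psi @: X| <= #|X :&: branches|.+1.
Proof.
move=> pe; have : psi @: X \subset psi @: (X :&: ([set r] :|: branches)).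
  apply/subsetP => _ /imsetP [x xX ->]; have [s sX /andP [st /eqP <-]] := pe_start pe xX.
  by apply/imsetP; exists s => //; rewrite !inE sX.
move/subset_leq_card/leq_trans; apply; apply: leq_trans (leq_imset_card _ _) _.
rewrite setIUr -add1n; apply: leq_trans (leq_card_setU _ _) (leq_add _ (leqnn _)).
by rewrite -(cards1 r) subset_leq_card // subsetIr.
Qed.

Definition upd (psi : T -> 'I_M) (v : T) (b : 'I_M) : T -> 'I_M :=
  fun x => if x == v then b else psi x.

Lemma partial_embedding_ext X psi v b : partial_embedding X psi ->
  v \notin X -> v != r -> parent v \in X ->
  (~~ branch v -> b = psi (parent v)) ->
  (branch v -> joins (level (parent v)) (psi (parent v)) b) ->
  (forall y, y \in X -> psi y = b -> level y = level v -> False) ->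
  b \in good (l - #|(v |: X) :&: branches|) ->
  (~~ branch v -> exists2 s, s \in X & starts s && (psi s == b)) ->
  (forall s, s \in X -> starts s -> psi s = b -> level s <= level v) ->
  (branch v -> forall y, y \in X -> psi y = b -> level v <= level y) ->
  partial_embedding (v |: X) (upd psi v b).
Proof.
move=> pe vX vr pvX b_heir b_branch b_inj b_good b_start b_min v_min.
have updv : upd psi v b v = b by rewrite /upd eqxx.
have updX x : x \in X -> upd psi v b x = psi x.
  by move=> xX; rewrite /upd ifN //; apply: contraNneq vX => <-.
have startv : starts v = branch v by rewrite /starts (negbTE vr).
split.
- by rewrite inE (pe_root pe) orbT.
- move=> x /setU1P [->|xX] xr; rewrite inE ?pvX ?(pe_parent pe xX xr) orbT //.
- move=> x /setU1P [->|xX] xr nbx; first by rewrite updv updX // b_heir.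
  by rewrite !updX ?(pe_parent pe) //; apply: (pe_heir pe).
- move=> x /setU1P [->|xX] bx; first by rewrite updv updX // b_branch.
  by rewrite !updX ?(pe_parent pe) ?branch_neq_root //; apply: (pe_branch pe).
- move=> x y /setU1P [->|xX] /setU1P [->|yX] //; rewrite ?updv ?updX //.
  + by move=> /esym yb /esym /(b_inj y yX yb).
  + by move=> xb /(b_inj x xX xb).
  exact: (pe_inj pe).
- move=> x /setU1P [->|xX]; rewrite ?updv ?updX //.
  apply: subsetP (pe_good pe xX); apply: good_subset; rewrite leq_sub2l //.
  by rewrite subset_leq_card // setSI // subsetUr.
- move=> x /setU1P [->|xX].
    case: (boolP (branch v)) => [bv|/b_start [s sX st]].
      by exists v; rewrite ?setU11 // startv bv updv /=.
    by exists s; rewrite ?inE ?sX ?orbT // updv (updX s sX).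
  have [s sX st] := pe_start pe xX.
  by exists s; rewrite ?inE ?sX ?orbT // (updX s sX) (updX x xX).
- move=> s y /setU1P [->|sX] /setU1P [->|yX] //; rewrite ?updv ?updX //.
  + by rewrite startv => bv /esym; apply: v_min.
  + by move=> st /b_min; apply.
  exact: (pe_start_min pe).
Qed.

Lemma partial_embedding_branch X psi v : partial_embedding X psi ->
  v \notin X -> branch v -> parent v \in X ->
  exists psi', partial_embedding (v |: X) psi'.
Proof.
move=> pe vX bv pvX; have vr := branch_neq_root bv.
have vXJ : #|(v |: X) :&: branches| = #|X :&: branches|.+1.
  by rewrite setIUl (setIidPl _) ?sub1set ?inE // cardsU1 inE (negbTE vX).
have cJ : #|X :&: branches|.+1 <= #|branches|.
  by rewrite -vXJ subset_leq_card // subsetIr.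
have := pe_good pe pvX; have -> : l - #|X :&: branches| = (l - #|X :&: branches|.+1).+1.
  by have := card_branches; lia.
rewrite inE => /andP [_ /forall_inP /(_ v)]; rewrite inE => /(_ bv) many.
pose C := [set b in good (l - #|X :&: branches|.+1)
                | joins (level (parent v)) (psi (parent v)) b].
have /subsetPn [b] : ~~ (C \subset psi @: X).
  apply: contraTN many => /subset_leq_card CX; rewrite -ltnNge.
  exact: leq_ltn_trans (leq_trans CX (leq_trans (card_used_paths pe) cJ)) card_branches.
rewrite inE => /andP [b_good b_join] b_new.
have b_fresh y : y \in X -> psi y = b -> False.
  by move=> yX yb; move: b_new; rewrite -yb imset_f.
exists (upd psi v b); apply: (partial_embedding_ext pe vX vr pvX).
- by rewrite bv.
- by [].
- by move=> y yX /b_fresh.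
- by rewrite vXJ.
- by rewrite bv.
- by move=> s sX _ /b_fresh.
- by move=> _ y yX /b_fresh.
Qed.

Lemma partial_embedding_heir X psi v : partial_embedding X psi ->
  v \notin X -> v != r -> ~~ branch v -> parent v \in X ->
  partial_embedding (v |: X) (upd psi v (psi (parent v))).
Proof.
move=> pe vX vr nbv pvX; have lv := level_heir vr nbv.
apply: (partial_embedding_ext pe vX vr pvX).
- by [].
- by move=> bv; rewrite bv in nbv.
- move=> y yX py; rewrite lv; case: (boolP (starts y)) => [sy|].
    by have := pe_start_min pe yX pvX sy py; lia.
  rewrite /starts negb_or => /andP [yr nby].
  rewrite (pe_heir pe yX yr nby) (level_heir yr nby) in py * => -[lp].
  have := pe_inj pe (pe_parent pe yX yr) pvX py lp.
  by move=> /(nonbranch_inj yr vr nby nbv) yv; move: yX; rewrite yv (negbTE vX).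
- rewrite setIUl (_ : [set v] :&: branches = set0) ?set0U; first exact: pe_good.
  by apply/setP => x; rewrite !inE; case: eqP => // ->; rewrite (negbTE nbv).
- by move=> _; have [s sX st] := pe_start pe pvX; exists s.
- by move=> s sX st ps; rewrite lv; apply: leqW; apply: (pe_start_min pe).
- by move=> bv; rewrite bv in nbv.
Qed.

Lemma partial_embedding_card k : k < #|T| ->
  exists X psi, partial_embedding X psi /\ #|X| = k.+1.
Proof.
elim: k => [|k IH] kT.
  by have [psi pe] := partial_embedding_root; exists [set r], psi; rewrite cards1.
have [X [psi [pe cX]]] := IH (ltnW kT).
have [x0 x0X] : exists x0, x0 \notin X.
  apply/existsP; apply: contraTT kT; rewrite negb_exists => /forallP allX.
  rewrite -leqNgt -cX -cardsT; apply: subset_leq_card.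
  by apply/subsetP => x _; move: (allX x); rewrite negbK.
case: (@arg_minnP _ x0 (fun x => x \notin X) depth x0X) => v vX vmin.
have vr : v != r by apply: contraNneq vX => ->; apply: pe_root pe.
have pvX : parent v \in X.
  by apply: contraT => /vmin; rewrite leqNgt (depth_parent vr) ltnSn.
have [psi' pe'] : exists psi', partial_embedding (v |: X) psi'.
  case: (boolP (branch v)) => bv; first exact: partial_embedding_branch pe vX bv pvX.
  by eexists; apply: partial_embedding_heir pe vX vr bv pvX.
by exists (v |: X), psi'; rewrite cardsU1 vX cX.
Qed.

Lemma copy_of_disjoint_paths : contains_copy ET G.
Proof.
have T0 : 0 < #|T| by apply/card_gt0P; exists r.
have [X [psi [pe cX]]] : exists X psi, partial_embedding X psi /\ #|X| = #|T|.-1.+1.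
  by apply: partial_embedding_card; rewrite ltn_predL.
have XT : X = setT by apply/eqP; rewrite eqEcard subsetT cardsT cX prednK // leqnn.
rewrite XT in pe; have inT x : x \in [set: T] := in_setT x.
exists (fun x => Q (psi x) (level x)); split.
  move=> x y /(proj1 Q_paths _ _ _ _ (ltn_ord _) (level_lt x) (ltn_ord _) (level_lt y)).
  move=> [/val_inj].
  exact: (pe_inj pe (inT x) (inT y)).
move=> u v /edge_parent [vr ->]; case: (boolP (branch v)) => bv.
  by rewrite (level_branch bv); apply: (pe_branch pe (inT v) bv).
rewrite (pe_heir pe (inT v) vr bv) (level_heir vr bv); apply: (proj2 Q_paths) => //.
by rewrite -(level_heir vr bv) level_lt.
Qed.

End Embedding.

End OutTree.

Theorem mainTheorem19 :
  forall l : nat, 0 < l ->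
  exists c : nat,
    forall (T : finType) (ET : rel T), out_tree ET -> #|out_leaves ET| = l ->
    forall m : nat, 0 < m ->
    forall (V : finType) (G : rel V), c * #|T| * m <= #|V| ->
      contains_copy ET G \/ exists S : {set V}, #|S| = m /\ independent G S.
Proof.
move=> l l0; exists (2 * l * l * l + 2).
move=> T ET [_ [[T0 [T_connected T_edges]] [r T_root]]] leaves_l m m0 V G szV.
have [[S [cS iS]]|noS] := classic (exists S : {set V}, #|S| = m /\ independent G S).
  by right; exists S.
left; have G_free : indep_free G m by move=> S cS iS; apply: noS; exists S.
pose M := (2 * l * l * l * m).+1.
have szM : (M + m) * #|T| <= #|V|.
  by apply: leq_trans szV; rewrite mulnAC leq_mul2r /M; apply/orP; right; nia.
have [Q Q_paths] := disjoint_paths T0 G_free szM.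
by apply: (copy_of_disjoint_paths T_connected T_edges T_root Q_paths G_free
  leaves_l l0).
Qed.
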